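(* For every sequence $s\in\mathbb Z_{\ge0}^n$, the set of $s$-Tamari trees forms a sublattice of the $s$-weak order.
   Context: Let $s=(s(1),\dots,s(n))\in\mathbb Z_{\ge0}^n$. An $s$-decreasing tree is a planar rooted tree with $n$ internal nodes labeled bijectively by $1,\dots,n$ (leaves unlabeled), the node $i$ having exactly $s(i)+1$ ordered children (subtrees numbered $0,\dots,s(i)$ left to right), labels decreasing from the root. For $a<b$, $\mathrm{card}_T(b,a)$ is $k$ if $a$ lies in the $k$-th child subtree of $b$, $0$ if $a$ is not a descendant of $b$ and lies to the left of $b$, and $s(b)$ if $a$ is not a descendant of $b$ and lies to the right of $b$. The $s$-weak order: $T\le T'$ iff $\mathrm{card}_T(b,a)\le\mathrm{card}_{T'}(b,a)$ for all $a<b$; it is a lattice. An $s$-Tamari tree is an $s$-decreasing tree $T$ with $\mathrm{card}_T(c,a)\le\mathrm{card}_T(c,b)$ for all $1\le a<b<c\le n$. *)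

From mathcomp Require Import all_boot.
Set Implicit Arguments. Unset Strict Implicit. Unset Printing Implicit Defensive.

Inductive tree : Type := Leaf | Node of nat & seq tree.

Fixpoint labels (t : tree) : seq nat :=
  match t with
  | Leaf => [::]
  | Node l ch => l :: flatten (map labels ch)
  end.

(* s(i) for 1 <= i <= n, with s given as the sequence (s(1),...,s(n)). *)
Definition sval (s : seq nat) (i : nat) : nat := nth 0 s i.-1.

Definition node_label (t : tree) : option nat :=
  match t with Leaf => None | Node l _ => Some l end.

Fixpoint dec_ok (s : seq nat) (t : tree) : bool :=
  match t with
  | Leaf => true
  | Node l ch =>
      [&& size ch == (sval s l).+1,
          all (fun c => if node_label c is Some l' then l' < l else true) ch
        & all (dec_ok s) ch]
  end.

Definition s_decreasing (s : seq nat) (T : tree) : Prop :=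
  perm_eq (labels T) (iota 1 (size s)) /\ dec_ok s T.

Fixpoint children_of (b : nat) (t : tree) : option (seq tree) :=
  match t with
  | Leaf => None
  | Node l ch =>
      if l == b then Some ch
      else foldr (fun c acc => if children_of b c is Some x then Some x else acc)
                 None ch
  end.

(* card_T(b,a) for a < b:
   - k if a lies in the k-th child subtree of b (children numbered 0..s(b));
   - 0 if a is not a descendant of b and lies to the left of b;
   - s(b) if a is not a descendant of b and lies to the right of b.
   For non-descendants, "left of b" is read off the preorder: two nodes that
   are not ancestor-related appear in preorder in left-to-right order (and a,
   having a smaller label, cannot be an ancestor of b). *)
Definition tcard (s : seq nat) (T : tree) (b a : nat) : nat :=
  match children_of b T with
  | Some ch =>
      if has (fun c => a \in labels c) ch then find (fun c => a \in labels c) ch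
      else if index a (labels T) < index b (labels T) then 0 else sval s b
  | None => 0
  end.

Definition s_weak_le (s : seq nat) (T T' : tree) : Prop :=
  forall a b, 1 <= a -> a < b -> b <= size s -> tcard s T b a <= tcard s T' b a.

Definition s_tamari (s : seq nat) (T : tree) : Prop :=
  s_decreasing s T /\
  forall a b c, 1 <= a -> a < b -> b < c -> c <= size s ->
    tcard s T c a <= tcard s T c b.

Definition is_meet (s : seq nat) (T1 T2 M : tree) : Prop :=
  [/\ s_decreasing s M, s_weak_le s M T1, s_weak_le s M T2 &
      forall N, s_decreasing s N -> s_weak_le s N T1 -> s_weak_le s N T2 ->
        s_weak_le s N M].

Definition is_join (s : seq nat) (T1 T2 J : tree) : Prop :=
  [/\ s_decreasing s J, s_weak_le s T1 J, s_weak_le s T2 J &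
      forall N, s_decreasing s N -> s_weak_le s T1 N -> s_weak_le s T2 N ->
        s_weak_le s J N].

From mathcomp Require Import all_boot zify.
Set Implicit Arguments. Unset Strict Implicit. Unset Printing Implicit Defensive.

(* The functions (c, a) |-> card_T(c, a) of s-decreasing trees T are exactly the
   f with f(c, a) <= s(c) such that, for a < c < d, f(d, a) < f(d, c) forces
   f(c, a) = 0 and f(d, a) > f(d, c) forces f(c, a) = s(c): the tree realizing
   such an f is built top-down, the largest label at the root.
   For Tamari trees T1, T2 the pointwise minimum h of their card functions is of
   this kind, so it is realized by a tree N below T1 and T2, hence below their
   meet M; then M(c, a) <= h(c, a) <= h(c, b) = N(c, b) <= M(c, b) for a < b < c.
   For the join J, the suffix minimum g(c, a) = min_{a <= x < c} J(c, x) is of this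
   kind; every Tamari tree below J lies below its realization N, so J <= N and
   J(c, a) <= g(c, a) <= g(c, b) <= J(c, b). *)


Section Flatten.
Variable T : eqType.
Implicit Type L : seq (seq T).

Lemma flatten_nthP L x :
  reflect (exists2 i, i < size L & x \in nth [::] L i) (x \in flatten L).
Proof.
apply: (iffP flattenP) => [[l Ll xl] | [i iL xi]].
  by exists (index l L); rewrite ?index_mem ?nth_index.
by exists (nth [::] L i); rewrite ?mem_nth.
Qed.

Lemma flatten_nth_cat L k : k < size L ->
  flatten L = flatten (take k L) ++ nth [::] L k ++ flatten (drop k.+1 L).
Proof. by move=> kL; rewrite -{1}(cat_take_drop k L) flatten_cat (drop_nth [::] kL). Qed.

Lemma uniq_flatten_nth L k : uniq (flatten L) -> uniq (nth [::] L k).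
Proof.
have [kL|/(nth_default [::])-> //] := ltnP k (size L).
by rewrite (flatten_nth_cat kL) !cat_uniq => /and3P[_ _ /andP[]].
Qed.

Lemma index_flatten L k x : uniq (flatten L) -> k < size L -> x \in nth [::] L k ->
  index x (flatten L) = size (flatten (take k L)) + index x (nth [::] L k).
Proof.
move=> UL kL xk; move: UL; rewrite (flatten_nth_cat kL) cat_uniq.
move=> /and3P[_ /hasPn notA _].
by rewrite index_cat (negbTE (notA x _)) ?index_cat ?xk // mem_cat xk.
Qed.

Lemma index_flatten_lt L i j x y : uniq (flatten L) -> i < j -> j < size L ->
  x \in nth [::] L i -> y \in nth [::] L j -> index x (flatten L) < index y (flatten L).
Proof.
move=> UL ij jL xi yj; have iL := ltn_trans ij jL.
rewrite (index_flatten UL iL xi) (index_flatten UL jL yj).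
apply: (@leq_trans (size (flatten (take i.+1 L)))).
  by rewrite (take_nth [::] iL) flatten_rcons size_cat ltn_add2l index_mem.
by rewrite -(cat_take_drop i.+1 (take j L)) take_takel // flatten_cat size_cat -addnA leq_addr.
Qed.

Lemma flatten_uniq_nth_inj L i j x : uniq (flatten L) -> i < size L -> j < size L ->
  x \in nth [::] L i -> x \in nth [::] L j -> i = j.
Proof.
move=> UL iL jL xi xj; case: (ltngtP i j) => // [ij|ji].
  by have := index_flatten_lt UL ij jL xi xj; rewrite ltnn.
by have := index_flatten_lt UL ji iL xj xi; rewrite ltnn.
Qed.

Lemma perm_flatten_map (I : eqType) (F G : I -> seq T) (r : seq I) :
  {in r, forall k, perm_eq (F k) (G k)} ->
  perm_eq (flatten (map F r)) (flatten (map G r)).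
Proof.
elim: r => //= k r IH FG; rewrite perm_cat ?FG ?mem_head // IH // => j jr.
by apply: FG; rewrite in_cons jr orbT.
Qed.

Lemma perm_flatten_fibres (g : T -> nat) K (S : seq T) : {in S, forall x, g x < K} ->
  perm_eq (flatten [seq [seq x <- S | g x == k] | k <- iota 0 K]) S.
Proof.
move=> gK; apply/permP => p; rewrite count_flatten -map_comp.
have sumn_fibres K' : sumn [seq count p [seq x <- S | g x == k] | k <- iota 0 K'] =
                      count (fun x => p x && (g x < K')) S.
  elim: K' => [|K' IH]; first by rewrite (@eq_count _ _ pred0) ?count_pred0 // => x; rewrite andbF.
  rewrite -addn1 iotaD map_cat sumn_cat IH /= addn0 count_filter -count_predUI.
  rewrite (@eq_count _ (predI _ _) pred0) ?count_pred0 ?addn0; last first.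
    by move=> x /=; rewrite add0n; case: (p x) => //=; case: ltngtP.
  by apply: eq_count => x /=; case: (p x) => //=; lia.
by rewrite /= sumn_fibres; apply: eq_in_count => x /gK ->; rewrite andbT.
Qed.

End Flatten.

Lemma mem_bigmax_seq (S : seq nat) : S != [::] -> \max_(x <- S) x \in S.
Proof.
elim: S => [//|y S IH] _; rewrite big_cons in_cons.
have [->|/IH] := eqVneq S [::]; first by rewrite big_nil maxn0 eqxx.
by move=> MS; case: leqP; rewrite ?MS ?orbT ?eqxx.
Qed.

Lemma leq_foldr_minn w d (l : seq nat) :
  (w <= foldr minn d l) = (w <= d) && all (leq w) l.
Proof. by elim: l => [|x l IH] /=; rewrite ?andbT // leq_min IH andbCA. Qed.

Lemma foldr_minn_lt v d (l : seq nat) :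
  (foldr minn d l < v) = (d < v) || has (fun x => x < v) l.
Proof.
rewrite ltnNge leq_foldr_minn negb_and -ltnNge -has_predC.
by congr orb; apply: eq_has => x /=; rewrite -ltnNge.
Qed.

Definition tree_nth_ind (P : tree -> Prop) (PLeaf : P Leaf)
  (PNode : forall l ch, (forall k, k < size ch -> P (nth Leaf ch k)) -> P (Node l ch)) :
  forall t, P t :=
  fix F t := match t with
  | Leaf => PLeaf
  | Node l ch => PNode l ch
      ((fix G ch : forall k, k < size ch -> P (nth Leaf ch k) :=
          match ch with
          | [::] => fun k (lt_k0 : k < 0) => False_ind _ (notF lt_k0)
          | t0 :: ch' => fun k => match k with
                                  | 0 => fun _ => F t0
                                  | k'.+1 => G ch' k'
                                  end
          end) ch)
  end.

Definition first_children (b : nat) (ch : seq tree) : option (seq tree) :=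
  foldr (fun c acc => if children_of b c is Some x then Some x else acc) None ch.

Lemma children_of_Node b l ch :
  children_of b (Node l ch) = if l == b then Some ch else first_children b ch.
Proof. by []. Qed.

Lemma first_children_None b ch :
  (forall k, k < size ch -> children_of b (nth Leaf ch k) = None) ->
  first_children b ch = None.
Proof. by elim: ch => //= t ch IH none; rewrite (none 0) ?IH // => k; apply: (none k.+1). Qed.

Lemma first_children_nth b ch k x : k < size ch ->
  (forall j, j < k -> children_of b (nth Leaf ch j) = None) ->
  children_of b (nth Leaf ch k) = Some x -> first_children b ch = Some x.
Proof.
elim: ch k => [//|t ch IH] [|k] /= kch none chk; first by rewrite chk.
by rewrite (none 0) // (IH k) // => j jk; apply: (none j.+1).
Qed.

Lemma first_childrenP b ch x : first_children b ch = Some x ->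
  exists2 k, k < size ch & children_of b (nth Leaf ch k) = Some x.
Proof.
elim: ch => [//|t ch IH] /=; case chb: (children_of b t) => [y|].
  by move=> [<-]; exists 0.
by move/IH => [k kch chk]; exists k.+1.
Qed.

Lemma labels_Node l ch : labels (Node l ch) = l :: flatten (map labels ch).
Proof. by []. Qed.

Lemma mem_labels_Node l ch x :
  reflect (x = l \/ exists2 k, k < size ch & x \in labels (nth Leaf ch k))
          (x \in labels (Node l ch)).
Proof.
rewrite labels_Node in_cons.
apply: (iffP orP) => [[/eqP|/flatten_nthP[k]]|[->|[k kch xk]]].
- by left.
- by rewrite size_map => kch; rewrite (nth_map Leaf) // => xk; right; exists k.
- by left.
- by right; apply/flatten_nthP; exists k; rewrite ?size_map ?(nth_map Leaf).
Qed.

Lemma mem_labels_child l ch k x : k < size ch ->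
  x \in labels (nth Leaf ch k) -> x \in labels (Node l ch).
Proof. by move=> kch xk; apply/mem_labels_Node; right; exists k. Qed.

Section UniqLabels.
Variables (l : nat) (ch : seq tree).
Hypothesis uniq_t : uniq (labels (Node l ch)).

Let uniq_flatten_ch : uniq (flatten (map labels ch)).
Proof. by case/andP: uniq_t. Qed.

Lemma uniq_labels_child k : uniq (labels (nth Leaf ch k)).
Proof.
have [kch|/(nth_default Leaf)-> //] := ltnP k (size ch).
by have := uniq_flatten_nth k uniq_flatten_ch; rewrite (nth_map Leaf).
Qed.

Lemma labels_child_inj i j x : i < size ch -> j < size ch ->
  x \in labels (nth Leaf ch i) -> x \in labels (nth Leaf ch j) -> i = j.
Proof.
move=> ich jch xi xj; apply: (flatten_uniq_nth_inj uniq_flatten_ch (x := x));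
  by rewrite ?size_map ?(nth_map Leaf).
Qed.

Lemma root_notin_child k : l \notin labels (nth Leaf ch k).
Proof.
have [kch|/(nth_default Leaf)-> //] := ltnP k (size ch).
move: uniq_t => /andP[+ _]; apply: contra => lk.
by apply/flatten_nthP; exists k; rewrite ?size_map ?(nth_map Leaf).
Qed.

Lemma index_labels_child_lt i j x y : i < j -> j < size ch ->
  x \in labels (nth Leaf ch i) -> y \in labels (nth Leaf ch j) ->
  index x (labels (Node l ch)) < index y (labels (Node l ch)).
Proof.
move=> ij jch xi yj.
have xl : x != l by apply: contraNneq (root_notin_child i) => <-.
have yl : y != l by apply: contraNneq (root_notin_child j) => <-.
rewrite labels_Node /= eq_sym (negbTE xl) eq_sym (negbTE yl) ltnS.
by apply: (index_flatten_lt uniq_flatten_ch ij); rewrite ?size_map ?(nth_map Leaf) ?(ltn_trans ij).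
Qed.

Lemma index_labels_child_same k x y : k < size ch ->
  x \in labels (nth Leaf ch k) -> y \in labels (nth Leaf ch k) ->
  (index x (labels (Node l ch)) < index y (labels (Node l ch))) =
  (index x (labels (nth Leaf ch k)) < index y (labels (nth Leaf ch k))).
Proof.
move=> kch xk yk.
have xl : x != l by apply: contraNneq (root_notin_child k) => <-.
have yl : y != l by apply: contraNneq (root_notin_child k) => <-.
have kch' : k < size (map labels ch) by rewrite size_map.
rewrite labels_Node /= eq_sym (negbTE xl) eq_sym (negbTE yl) ltnS.
by rewrite !(index_flatten uniq_flatten_ch kch') ?(nth_map Leaf) // ltn_add2l.
Qed.

End UniqLabels.

Lemma children_of_notin c t : c \notin labels t -> children_of c t = None.
Proof.
elim/tree_nth_ind: t => [//|l ch IH] ct; rewrite children_of_Node.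
rewrite ifN; last by apply: contraNneq ct => ->; rewrite labels_Node mem_head.
apply: first_children_None => k kch; apply: IH => //.
by apply: contra ct; apply: mem_labels_child.
Qed.

Lemma children_of_mem c t : c \in labels t -> exists x, children_of c t = Some x.
Proof.
elim/tree_nth_ind: t => [//|l ch IH] /mem_labels_Node ct; rewrite children_of_Node.
case: eqP => [_|lc]; first by eexists.
have {ct} [k kch ck] : exists2 k, k < size ch & c \in labels (nth Leaf ch k).
  by case: ct => // cl; case: lc.
have has_c : has (fun t => c \in labels t) ch by apply/(has_nthP Leaf); exists k.
have k0ch : find (fun t => c \in labels t) ch < size ch by rewrite -has_find.
have [x chx] := IH _ k0ch (nth_find Leaf has_c).
exists x; apply: (first_children_nth k0ch) chx => j /(before_find Leaf) /negbT.
exact: children_of_notin.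
Qed.

Lemma children_of_subset c t ch' k : children_of c t = Some ch' ->
  {subset labels (nth Leaf ch' k) <= labels t}.
Proof.
elim/tree_nth_ind: t ch' => [//|l ch IH] ch'; rewrite children_of_Node.
case: eqP => [_ [<-] x xk|_ /first_childrenP[j jch chj] x /(IH j jch _ chj) xj].
  have [kch|/(nth_default Leaf) chk] := ltnP k (size ch); last by rewrite chk in xk.
  exact: mem_labels_child xk.
exact: mem_labels_child jch xj.
Qed.

Lemma uniq_children_of_child m ch k c : uniq (labels (Node m ch)) -> k < size ch ->
  c \in labels (nth Leaf ch k) -> children_of c (Node m ch) = children_of c (nth Leaf ch k).
Proof.
move=> uniq_t kch ck; rewrite children_of_Node ifN; last first.
  by apply: contraNneq (root_notin_child uniq_t k) => ->.
have [x chx] := children_of_mem ck; rewrite chx.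
apply: (first_children_nth kch) chx => j jk; apply: children_of_notin.
apply/negP => cj; have := labels_child_inj uniq_t (ltn_trans jk kch) kch cj ck.
by move/eqP; rewrite (ltn_eqF jk).
Qed.

Lemma dec_ok_Node s l ch : dec_ok s (Node l ch) =
  [&& size ch == (sval s l).+1,
      all (fun c => if node_label c is Some l' then l' < l else true) ch
    & all (dec_ok s) ch].
Proof. by []. Qed.

Lemma dec_ok_child s m ch k : dec_ok s (Node m ch) -> dec_ok s (nth Leaf ch k).
Proof.
have [kch|/(nth_default Leaf)-> //] := ltnP k (size ch).
by case/and3P => _ _ /(all_nthP Leaf); apply.
Qed.

Lemma dec_ok_label_max s t m x : dec_ok s t -> node_label t = Some m ->
  x \in labels t -> x <= m.
Proof.
elim/tree_nth_ind: t m => [//|l ch IH] m dec_t [<-] /mem_labels_Node[->//|[k kch xk]].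
have /and3P[_ /(all_nthP Leaf)/(_ k kch) lt_k _] := dec_t.
move: xk lt_k (IH k kch) (dec_ok_child k dec_t).
case: (nth Leaf ch k) => [//|l' ch'] /= xk l'l IHk dec_k.
exact: leq_trans (IHk l' dec_k erefl xk) (ltnW l'l).
Qed.

Lemma size_children_of s c t ch' : dec_ok s t -> children_of c t = Some ch' ->
  size ch' = (sval s c).+1.
Proof.
elim/tree_nth_ind: t ch' => [//|l ch IH] ch' dec_t; rewrite children_of_Node.
case: eqP => [<- [<-]|_ /first_childrenP[k kch]]; first by case/and3P: dec_t => /eqP.
exact: IH k kch ch' (dec_ok_child k dec_t).
Qed.

Section TreeCard.
Variable s : seq nat.

Lemma tcard_le_sval t c a : dec_ok s t -> tcard s t c a <= sval s c.
Proof.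
rewrite /tcard; case chc: (children_of c t) => [ch'|//] dec_t.
case: ifP => [has_a|_]; last by case: ifP.
by rewrite -ltnS -(size_children_of dec_t chc) -has_find.
Qed.

Variables (m : nat) (ch : seq tree).
Hypothesis uniq_t : uniq (labels (Node m ch)).

Lemma tcard_Node_root k a : k < size ch -> a \in labels (nth Leaf ch k) ->
  tcard s (Node m ch) m a = k.
Proof.
move=> kch ak; rewrite /tcard children_of_Node eqxx.
have has_a : has (fun t => a \in labels t) ch by apply/(has_nthP Leaf); exists k.
have find_lt : find (fun t => a \in labels t) ch < size ch by rewrite -has_find.
by rewrite has_a; exact: (labels_child_inj uniq_t find_lt kch (nth_find Leaf has_a) ak).
Qed.

Lemma tcard_Node_child k c a : k < size ch ->
  c \in labels (nth Leaf ch k) -> a \in labels (nth Leaf ch k) ->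
  tcard s (Node m ch) c a = tcard s (nth Leaf ch k) c a.
Proof.
move=> kch ck ak; rewrite /tcard (uniq_children_of_child uniq_t kch ck).
by case: (children_of c _) => // ch'; rewrite (index_labels_child_same uniq_t kch).
Qed.

Lemma tcard_Node_apart kc ka c a : kc < size ch -> ka < size ch -> ka != kc ->
  c \in labels (nth Leaf ch kc) -> a \in labels (nth Leaf ch ka) ->
  tcard s (Node m ch) c a = if ka < kc then 0 else sval s c.
Proof.
move=> kcch kach neq_k ckc aka; rewrite /tcard (uniq_children_of_child uniq_t kcch ckc).
have [ch' chc] := children_of_mem ckc; rewrite chc.
rewrite ifN; last first.
  apply/(has_nthP Leaf) => -[j _ aj]; move/eqP: neq_k; apply.
  exact: (labels_child_inj uniq_t kach kcch aka (children_of_subset chc aj)).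
case: (ltngtP ka kc) neq_k => [lt_k _|lt_k _|//].
  by rewrite (index_labels_child_lt uniq_t lt_k kcch aka ckc).
by rewrite ltnNge ltnW // (index_labels_child_lt uniq_t lt_k kach ckc aka).
Qed.

End TreeCard.

Definition card_planar (s : seq nat) (f : nat -> nat -> nat) (a c d : nat) :=
  (f d a < f d c -> f c a = 0) /\ (f d c < f d a -> f c a = sval s c).

Lemma tcard_planar s t a c d : dec_ok s t -> uniq (labels t) ->
  a \in labels t -> c \in labels t -> d \in labels t -> a < c -> c < d ->
  card_planar s (tcard s t) a c d.
Proof.
elim/tree_nth_ind: t => [//|m ch IH] dec_t uniq_t a_t c_t d_t ac cd.
have dm : d <= m by apply: dec_ok_label_max dec_t erefl d_t.
have in_child x : x \in labels (Node m ch) -> x < m ->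
    exists2 k, k < size ch & x \in labels (nth Leaf ch k).
  by case/mem_labels_Node => [->|//]; rewrite ltnn.
have [ka kach aka] := in_child a a_t (leq_trans (ltn_trans ac cd) dm).
have [kc kcch ckc] := in_child c c_t (leq_trans cd dm).
have le_sval x := tcard_le_sval d x dec_t.
have apart_ca : ka != kc -> tcard s (Node m ch) c a = if ka < kc then 0 else sval s c.
  by move=> neq_k; apply: tcard_Node_apart neq_k ckc aka.
case/mem_labels_Node: d_t le_sval => [->|[kd kdch dkd]] le_sval.
  rewrite /card_planar (tcard_Node_root s uniq_t kach aka).
  rewrite (tcard_Node_root s uniq_t kcch ckc).
  case: (eqVneq ka kc) => [->|/apart_ca->]; first by rewrite ltnn.
  by split => lt_k; rewrite ?lt_k // ltnNge ltnW.
have apart_d x kx : kx < size ch -> x \in labels (nth Leaf ch kx) -> kx != kd ->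
    tcard s (Node m ch) d x = if kx < kd then 0 else sval s d.
  by move=> kxch xkx neq_k; apply: tcard_Node_apart neq_k dkd xkx.
have [eq_ad|neq_ad] := eqVneq ka kd; have [eq_cd|neq_cd] := eqVneq kc kd.
- subst ka kc; rewrite /card_planar !(tcard_Node_child s uniq_t kdch) //.
  by apply: IH; rewrite ?(dec_ok_child kd dec_t) ?(uniq_labels_child uniq_t).
- subst ka; have neq_k : kd != kc by rewrite eq_sym.
  move: (le_sval a); rewrite /card_planar (apart_ca neq_k) (apart_d c kc) //.
  rewrite (tcard_Node_child s uniq_t kdch) //.
  by case: ifP; case: ifP; lia.
- subst kc; move: (le_sval c); rewrite /card_planar (apart_ca neq_ad).
  rewrite (apart_d a ka) // (tcard_Node_child s uniq_t kdch) //.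
  by case: ifP; lia.
- rewrite /card_planar (apart_d a ka) // (apart_d c kc) //.
  have [->|/apart_ca->] := eqVneq ka kc; first by rewrite ltnn.
  move/eqP: neq_ad; move/eqP: neq_cd; case: ifP; case: ifP; case: ifP; lia.
Qed.

Definition s_tree_inversions (s : seq nat) (f : nat -> nat -> nat) :=
  (forall a c, 0 < a -> a < c -> c <= size s -> f c a <= sval s c) /\
  (forall a c d, 0 < a -> a < c -> c < d -> d <= size s -> card_planar s f a c d).

Lemma tcard_s_tree_inversions s T : s_decreasing s T -> s_tree_inversions s (tcard s T).
Proof.
move=> [perm_T dec_T]; have uniq_T : uniq (labels T) by rewrite (perm_uniq perm_T) iota_uniq.
have mem_T x : 0 < x -> x <= size s -> x \in labels T.
  by rewrite (perm_mem perm_T) mem_iota; lia.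
split=> [a c _ _ _|a c d a0 ac cd ds]; first exact: tcard_le_sval.
by apply: tcard_planar; rewrite ?mem_T //; lia.
Qed.

Section Realization.
Variables (s : seq nat) (f : nat -> nat -> nat).
Hypothesis f_inv : s_tree_inversions s f.

Definition valid_labels (S : seq nat) := uniq S && all (fun x => 0 < x <= size s) S.

Definition fibre (S : seq nat) (k : nat) :=
  [seq x <- [seq x <- S | x < \max_(y <- S) y] | f (\max_(y <- S) y) x == k].

(* The tree realizing [f] on the label set [S] has the largest label [m] of [S] as
   root, and its child [k] realizes [f] on the labels [x < m] with [f m x = k].
   The recursion is on [fuel >= size S], since the fibres are strictly smaller. *)
Fixpoint build (fuel : nat) (S : seq nat) : tree :=
  if fuel is fu.+1 then
    if S is [::] then Leaf else
    Node (\max_(x <- S) x)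
      [seq build fu (fibre S k) | k <- iota 0 (sval s (\max_(x <- S) x)).+1]
  else Leaf.

Lemma build_Node fu S : S != [::] ->
  build fu.+1 S = Node (\max_(x <- S) x)
    [seq build fu (fibre S k) | k <- iota 0 (sval s (\max_(x <- S) x)).+1].
Proof. by case: S. Qed.

Section Fibres.
Variable S : seq nat.
Hypotheses (S_nil : S != [::]) (S_valid : valid_labels S).
Local Notation m := (\max_(x <- S) x).

Lemma lt_max_label x : x \in S -> x != m -> x < m.
Proof. by move=> xS xm; rewrite ltn_neqAle xm (leq_bigmax_seq x xS). Qed.

Lemma max_label_range : 0 < m <= size s.
Proof. by case/andP: S_valid => _ /allP; apply; apply: mem_bigmax_seq. Qed.

Lemma fibre_index_lt x : x \in S -> x < m -> f m x < (sval s m).+1.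
Proof.
move=> xS xm; have /andP[x0 _] := allP (andP S_valid).2 x xS.
by rewrite ltnS; apply: f_inv.1; case/andP: max_label_range.
Qed.

Lemma mem_fibre k x : (x \in fibre S k) = [&& x \in S, x < m & f m x == k].
Proof. by rewrite !mem_filter andbA andbC (andbC (_ == k)). Qed.

Lemma size_fibre k : size (fibre S k) < size S.
Proof.
apply: leq_ltn_trans (_ : _ <= size [seq x <- S | x < m]) _.
  by rewrite /fibre size_filter count_size.
rewrite size_filter ltn_neqAle count_size andbT -all_count.
by apply/allPn; exists m; rewrite ?ltnn // mem_bigmax_seq.
Qed.

Lemma valid_fibre k : valid_labels (fibre S k).
Proof.
case/andP: S_valid => uniq_S /allP range_S; rewrite /valid_labels !filter_uniq //=.
by apply/allP => x; rewrite mem_fibre => /andP[/range_S].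
Qed.

End Fibres.

Lemma perm_labels_build fu S : size S <= fu -> valid_labels S ->
  perm_eq (labels (build fu S)) S.
Proof.
elim: fu S => [|fu IH] S; first by rewrite leqn0 => /nilP->.
have [->//|S_nil size_S valid_S] := eqVneq S [::].
rewrite build_Node // labels_Node; set m := \max_(x <- S) x.
have mS : m \in S := mem_bigmax_seq S_nil.
rewrite perm_sym (permPl (perm_to_rem mS)) perm_cons perm_sym -map_comp.
rewrite (permPl (perm_flatten_map (G := fibre S) _)) => [|k _]; last first.
  by apply: IH; rewrite ?valid_fibre // -ltnS (leq_trans (size_fibre _ _) size_S).
have [uniq_S _] := andP valid_S.
rewrite (permPl (perm_flatten_fibres _)) => [|x]; last first.
  by rewrite mem_filter => /andP[xm xS]; apply: fibre_index_lt.
rewrite rem_filter // (@eq_in_filter _ _ (predC1 m)) => [|x xS /=]; first exact: perm_refl.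
by apply/idP/idP => [/ltn_eqF->|]; [|apply: lt_max_label].
Qed.

Lemma dec_ok_build fu S : size S <= fu -> valid_labels S -> dec_ok s (build fu S).
Proof.
elim: fu S => [|fu IH] S; first by rewrite leqn0 => /nilP->.
have [->//|S_nil size_S valid_S] := eqVneq S [::].
have size_fibre_fu k : size (fibre S k) <= fu.
  by rewrite -ltnS (leq_trans (size_fibre _ _) size_S).
rewrite build_Node //; set m := \max_(x <- S) x; set ch := map _ _.
have roots_lt : all (fun c => if node_label c is Some l' then l' < m else true) ch.
  rewrite all_map; apply/allP => k _ /=.
  case def_t: (build fu (fibre S k)) => [//|l ch'] /=.
  have : l \in fibre S k.
    have perm_k := perm_labels_build (size_fibre_fu k) (valid_fibre valid_S k).
    by rewrite -(perm_mem perm_k) def_t mem_head.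
  by rewrite mem_fibre => /and3P[].
have children_ok : all (dec_ok s) ch.
  by rewrite all_map; apply/allP => k _; apply: IH; rewrite ?valid_fibre.
by rewrite dec_ok_Node size_map size_iota eqxx roots_lt children_ok.
Qed.

Lemma tcard_build fu S : size S <= fu -> valid_labels S ->
  {in S &, forall a c, a < c -> tcard s (build fu S) c a = f c a}.
Proof.
elim: fu S => [|fu IH] S; first by rewrite leqn0 => /nilP->.
have [->//|S_nil size_S valid_S] := eqVneq S [::].
have size_fibre_fu k : size (fibre S k) <= fu.
  by rewrite -ltnS (leq_trans (size_fibre _ _) size_S).
have uniq_t := perm_uniq (perm_labels_build size_S valid_S).
rewrite (andP valid_S).1 build_Node // in uniq_t *.
set m := \max_(x <- S) x; set ch := map _ _.
have size_ch : size ch = (sval s m).+1 by rewrite size_map size_iota.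
have nth_ch k : k < size ch -> nth Leaf ch k = build fu (fibre S k).
  by rewrite size_ch => kK; rewrite (nth_map 0) ?size_iota // nth_iota.
have mem_child x : x \in S -> x < m -> x \in labels (nth Leaf ch (f m x)).
  move=> xS xm; rewrite nth_ch ?size_ch ?fibre_index_lt //.
  rewrite (perm_mem (perm_labels_build (size_fibre_fu _) (valid_fibre valid_S _))).
  by rewrite mem_fibre xS xm eqxx.
move=> a c aS cS ac; have cm : c <= m by apply: leq_bigmax_seq.
have am : a < m := leq_trans ac cm.
have ach := mem_child a aS am; have kach : f m a < size ch by rewrite size_ch fibre_index_lt.
have [->|/lt_max_label - /(_ cS) {}cm] := eqVneq c m; first exact: tcard_Node_root.
have cch := mem_child c cS cm; have kcch : f m c < size ch by rewrite size_ch fibre_index_lt.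
have [eq_k|neq_k] := eqVneq (f m a) (f m c).
  rewrite -eq_k in cch; rewrite (tcard_Node_child s uniq_t kach cch ach).
  rewrite nth_ch //; apply: IH; rewrite ?valid_fibre //.
    by rewrite mem_fibre aS am eqxx.
  by rewrite mem_fibre cS cm eq_k eqxx.
have /andP[a0 _] : 0 < a <= size s by case/andP: valid_S => _ /allP; apply.
have /andP[_ ms] := max_label_range S_nil valid_S.
have [planar_lt planar_gt] := f_inv.2 a c m a0 ac cm ms.
rewrite (tcard_Node_apart s uniq_t kcch kach neq_k cch ach).
by case: ltngtP neq_k => [/planar_lt|/planar_gt|].
Qed.

Lemma s_tree_inversions_realized : exists2 N, s_decreasing s N &
  forall a c, 0 < a -> a < c -> c <= size s -> tcard s N c a = f c a.
Proof.
have size_S : size (iota 1 (size s)) <= size s by rewrite size_iota.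
have valid_S : valid_labels (iota 1 (size s)).
  by rewrite /valid_labels iota_uniq; apply/allP => x; rewrite mem_iota; lia.
exists (build (size s) (iota 1 (size s))).
  by split; [apply: perm_labels_build | apply: dec_ok_build].
by move=> a c a0 ac cs; apply: tcard_build; rewrite ?mem_iota //; lia.
Qed.

End Realization.

Lemma tamari_min_inversions s T1 T2 : s_tamari s T1 -> s_tamari s T2 ->
  s_tree_inversions s (fun c a => minn (tcard s T1 c a) (tcard s T2 c a)).
Proof.
move=> [dec1 tam1] [dec2 tam2].
have [bound1 planar1] := tcard_s_tree_inversions dec1.
have [_ planar2] := tcard_s_tree_inversions dec2.
split=> [a c a0 ac cs|a c d a0 ac cd ds]; first by rewrite geq_min bound1.
have le1 := tam1 a c d a0 ac cd ds; have le2 := tam2 a c d a0 ac cd ds.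
have [lt1 _] := planar1 a c d a0 ac cd ds; have [lt2 _] := planar2 a c d a0 ac cd ds.
split=> lt_min; last by lia.
case: (leqP (tcard s T1 d a) (tcard s T2 d a)) => le12.
  by rewrite lt1 ?min0n //; lia.
by rewrite lt2 ?minn0 //; lia.
Qed.

Lemma meet_tamari s T1 T2 M : s_tamari s T1 -> s_tamari s T2 ->
  is_meet s T1 T2 M -> s_tamari s M.
Proof.
move=> tam1 tam2 [decM MT1 MT2 glb].
have [N decN cardN] := s_tree_inversions_realized (tamari_min_inversions tam1 tam2).
have NM : s_weak_le s N M.
  by apply: glb => // a c a0 ac cs; rewrite cardN // geq_min leqnn ?orbT.
split=> // a b c a0 ab bc cs; have ac := ltn_trans ab bc; have b0 := ltn_trans a0 ab.
apply: leq_trans (NM b c b0 bc cs); rewrite cardN // leq_min.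
apply/andP; split.
  exact: leq_trans (MT1 a c a0 ac cs) (tam1.2 a b c a0 ab bc cs).
exact: leq_trans (MT2 a c a0 ac cs) (tam2.2 a b c a0 ab bc cs).
Qed.

Definition suffix_min (s : seq nat) (J : tree) (c a : nat) :=
  foldr minn (sval s c) [seq tcard s J c x | x <- index_iota a c].

Section SuffixMin.
Variables (s : seq nat) (J : tree).

Lemma suffix_min_le_sval c a : suffix_min s J c a <= sval s c.
Proof. by have := leqnn (suffix_min s J c a); rewrite {2}/suffix_min leq_foldr_minn => /andP[]. Qed.

Lemma suffix_min_le c a x : a <= x < c -> suffix_min s J c a <= tcard s J c x.
Proof.
move=> axc; have := leqnn (suffix_min s J c a); rewrite {2}/suffix_min leq_foldr_minn.
by case/andP=> _ /allP; apply; apply: map_f; rewrite mem_index_iota.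
Qed.

Lemma suffix_min_mono c a b : a <= b -> suffix_min s J c a <= suffix_min s J c b.
Proof.
move=> ab; rewrite {2}/suffix_min leq_foldr_minn suffix_min_le_sval.
apply/allP => y /mapP[x]; rewrite mem_index_iota => /andP[bx xc] ->.
by apply: suffix_min_le; rewrite xc (leq_trans ab).
Qed.

Lemma suffix_min_inversions : s_decreasing s J -> s_tree_inversions s (suffix_min s J).
Proof.
move=> decJ; have [_ planarJ] := tcard_s_tree_inversions decJ.
split=> [a c _ _ _|a c d a0 ac cd ds]; first exact: suffix_min_le_sval.
have mono := suffix_min_mono d (ltnW ac).
split; last by rewrite ltnNge mono.
rewrite {1}/suffix_min foldr_minn_lt ltnNge suffix_min_le_sval /=.
case/hasP => y /mapP[x]; rewrite mem_index_iota => /andP[ax xd] -> lt_x.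
have xc : x < c.
  rewrite ltnNge; apply: contraTN lt_x => cx.
  by rewrite -leqNgt suffix_min_le // cx.
have Jcd : suffix_min s J d c <= tcard s J d c by rewrite suffix_min_le // leqnn.
have Jcx := (planarJ x c d (leq_trans a0 ax) xc cd ds).1 (leq_trans lt_x Jcd).
by apply/eqP; rewrite -leqn0 -Jcx suffix_min_le // ax.
Qed.

Lemma tamari_le_suffix_min T a c : s_tamari s T -> s_weak_le s T J ->
  0 < a -> a < c -> c <= size s -> tcard s T c a <= suffix_min s J c a.
Proof.
move=> [decT tamT] TJ a0 ac cs; rewrite leq_foldr_minn tcard_le_sval ?decT.2 //=.
apply/allP => y /mapP[x]; rewrite mem_index_iota => /andP[ax xc] ->.
apply: leq_trans (TJ x c (leq_trans a0 ax) xc cs).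
by move: ax; rewrite leq_eqVlt => /orP[/eqP<-|ax]; last exact: tamT.
Qed.

End SuffixMin.

Lemma join_tamari s T1 T2 J : s_tamari s T1 -> s_tamari s T2 ->
  is_join s T1 T2 J -> s_tamari s J.
Proof.
move=> tam1 tam2 [decJ T1J T2J lub].
have [N decN cardN] := s_tree_inversions_realized (suffix_min_inversions decJ).
have JN : s_weak_le s J N.
  by apply: lub => // a c a0 ac cs; rewrite cardN //; apply: tamari_le_suffix_min.
split=> // a b c a0 ab bc cs; have ac := ltn_trans ab bc.
apply: leq_trans (JN a c a0 ac cs) _; rewrite cardN //.
by apply: leq_trans (suffix_min_mono _ _ _ (ltnW ab)) (suffix_min_le _ _ _); rewrite leqnn.
Qed.

Theorem theorem2p2 (s : seq nat) :
  (forall T1 T2 M, s_tamari s T1 -> s_tamari s T2 -> is_meet s T1 T2 M ->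
     s_tamari s M) /\
  (forall T1 T2 J, s_tamari s T1 -> s_tamari s T2 -> is_join s T1 T2 J ->
     s_tamari s J).
Proof. by split=> T1 T2; [exact: meet_tamari | exact: join_tamari]. Qed.
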